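(* For the iterates of SONATA with step-size $\alpha\in(0,1]$ under Assumptions (A), (B), (C), (W), and assuming $D_{\max}>0$, for every $\nu\ge0$: $$\alpha\|d^\nu\|^2\ge\frac{\mu}{D_{\max}^2}\Big(p^{\nu+1}-(1-\alpha)p^\nu-\frac\alpha\mu\|\delta^\nu\|^2\Big).$$
   Context: Problem (P): minimize $U=F+G$ over $\mathcal K$, $F=\frac1m\sum_{i=1}^mf_i$. (A): $\mathcal K\subseteq\mathbb R^d$ nonempty closed convex; $f_i$ twice differentiable convex on open $\mathcal O\supseteq\mathcal K$; $\mu I\preceq\nabla^2F\preceq LI$ on $\mathcal K$ ($\mu>0$, $L<\infty$); $G$ convex on $\mathcal K$; $x^\star$ unique minimizer, $U^\star=U(x^\star)$. (B): connected undirected graph on $\{1,\dots,m\}$, edges $\mathcal E$. (W): $w_{ii}>0$; for $i\ne j$, $w_{ij}>0$ iff $(i,j)\in\mathcal E$, else 0; $W$ doubly stochastic. (C): $\tilde f_i:\mathcal O\times\mathcal O\to\mathbb R$ $C^2$, $\nabla\tilde f_i(x;x)=\nabla f_i(x)$, $\nabla\tilde f_i(\cdot;x)$ Lipschitz, $\tilde f_i(\cdot;x)$ strongly convex on $\mathcal K$ for all $x\in\mathcal K$; constants $D_i^\ell\le D_i^u$ with $D_i^\ell I\preceq\nabla^2\tilde f_i(x;y)-\nabla^2F(x)\preceq D_i^uI$ on $\mathcal K\times\mathcal K$; $D_{\max}=\max_i\max\{|D_i^\ell|,|D_i^u|\}$. SONATA: $x_i^0\in\mathcal K$, $y_i^0=\nabla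 f_i(x_i^0)$; $\hat x_i^\nu=\arg\min_{x_i\in\mathcal K}\tilde f_i(x_i;x_i^\nu)+(y_i^\nu-\nabla f_i(x_i^\nu))^\top(x_i-x_i^\nu)+G(x_i)$; $d_i^\nu=\hat x_i^\nu-x_i^\nu$; $x_i^{\nu+1/2}=x_i^\nu+\alpha d_i^\nu$; $x_i^{\nu+1}=\sum_jw_{ij}x_j^{\nu+1/2}$; $y_i^{\nu+1}=\sum_jw_{ij}(y_j^\nu+\nabla f_j(x_j^{\nu+1})-\nabla f_j(x_j^\nu))$. $d^\nu$ and $\delta^\nu$ stack $d_i^\nu$ and $\delta_i^\nu=\nabla F(x_i^\nu)-y_i^\nu$; $p^\nu=\sum_i(U(x_i^\nu)-U^\star)$. *)

From mathcomp Require Import all_boot all_order all_algebra.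
From mathcomp Require Import all_classical all_reals all_analysis.
Import numFieldNormedType.Exports.
Set Implicit Arguments. Unset Strict Implicit. Unset Printing Implicit Defensive.
Import Order.TTheory GRing.Theory Num.Theory.
Local Open Scope ring_scope.
Local Open Scope classical_set_scope.

Section Defs.
Variables (R : realType) (d : nat).
Local Notation V := 'rV[R]_d.

Definition dotv (u v : V) : R := (u *m v^T) 0 0.
Definition sqn (v : V) : R := dotv v v.
Definition enorm (v : V) : R := Num.sqrt (sqn v).

Definition convex_set_euc (S : set V) : Prop :=
  forall u v (t : R), S u -> S v -> 0 <= t <= 1 -> S (t *: u + (1 - t) *: v).

Definition convex_fun_on (S : set V) (h : V -> R) : Prop :=
  forall u v, (forall t : R, 0 <= t <= 1 -> S (t *: u + (1 - t) *: v)) ->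
  forall t : R, 0 <= t <= 1 ->
    h (t *: u + (1 - t) *: v) <= t * h u + (1 - t) * h v.

Definition strongly_convex_on (S : set V) (h : V -> R) : Prop :=
  exists c : R, 0 < c /\
  forall u v (t : R), S u -> S v -> 0 <= t <= 1 ->
    h (t *: u + (1 - t) *: v) <=
      t * h u + (1 - t) * h v - c / 2 * t * (1 - t) * sqn (u - v).

Definition lipschitz_on_euc (S : set V) (g : V -> V) : Prop :=
  exists Lc : R, forall u v, S u -> S v -> enorm (g u - g v) <= Lc * enorm (u - v).

(* Loewner order against scalar multiples of the identity:
   a I <= H  and  H <= b I  *)
Definition scal_le_mx (a : R) (H : 'M[R]_d) : Prop :=
  forall v : V, a * sqn v <= dotv (v *m H) v.
Definition mx_le_scal (H : 'M[R]_d) (b : R) : Prop :=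
  forall v : V, dotv (v *m H) v <= b * sqn v.

Definition has_grad (h : V -> R) (x : V) (g : V) : Prop :=
  is_diff x h (fun v : V => dotv v g).
Definition has_hess (g : V -> V) (x : V) (H : 'M[R]_d) : Prop :=
  is_diff x g (fun v : V => v *m H).

End Defs.

From mathcomp Require Import all_boot all_order all_algebra.
From mathcomp Require Import all_classical all_reals all_analysis.
From mathcomp Require Import ring lra.
Import numFieldNormedType.Exports.
Import Order.TTheory GRing.Theory Num.Theory.
Local Open Scope ring_scope.
Local Open Scope classical_set_scope.

(* Fix an agent i and let v = x* - xh_i.  First-order optimality of xh_i in its
   surrogate problem, strong convexity of F (Hessian >= mu) and the mean value
   theorem applied to e := grad ft_i(.; x_i) - grad F, whose Jacobian is symmetric
   (symmetry of second derivatives) and bounded by Dmax, give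
     U(xh_i) - U* <= <v, e(xh_i) - e(x_i)> + <v, y_i - grad F(x_i)> - mu/2 |v|^2,
   and two Young inequalities absorb |v|^2:
     U(xh_i) - U* <= Dmax^2/mu |d_i|^2 + |delta_i|^2/mu.
   As x^{nu+1} mixes the relaxed points x_j + alpha d_j through a doubly
   stochastic W, Jensen's inequality for the convex U gives
     p^{nu+1} <= (1 - alpha) p^nu + alpha sum_i [U(xh_i) - U*],
   and the claim follows by combining the two bounds. *)

Section EuclideanCalculus.
Local Set Implicit Arguments.
Local Unset Strict Implicit.
Variables (R : realType) (d : nat).
Local Notation V := 'rV[R]_d.
Implicit Types u v w : V.

Lemma dotvE u v : dotv u v = \sum_j u 0 j * v 0 j.
Proof. by rewrite /dotv !mxE; apply: eq_bigr => j _; rewrite mxE. Qed.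

Lemma dotvC u v : dotv u v = dotv v u.
Proof. by rewrite !dotvE; apply: eq_bigr => j _; rewrite mulrC. Qed.

Lemma dotvDl u w v : dotv (u + w) v = dotv u v + dotv w v.
Proof. by rewrite !dotvE -big_split; apply: eq_bigr => j _; rewrite mxE mulrDl. Qed.

Lemma dotvZl (a : R) u v : dotv (a *: u) v = a * dotv u v.
Proof. by rewrite !dotvE mulr_sumr; apply: eq_bigr => j _; rewrite mxE mulrA. Qed.

Lemma dotvBl u w v : dotv (u - w) v = dotv u v - dotv w v.
Proof. by rewrite -scaleN1r dotvDl dotvZl mulN1r. Qed.

Lemma dotvDr u w v : dotv v (u + w) = dotv v u + dotv v w.
Proof. by rewrite !(dotvC v) dotvDl. Qed.

Lemma dotvZr (a : R) u v : dotv v (a *: u) = a * dotv v u.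
Proof. by rewrite !(dotvC v) dotvZl. Qed.

Lemma dotvBr u w v : dotv v (u - w) = dotv v u - dotv v w.
Proof. by rewrite !(dotvC v) dotvBl. Qed.

Lemma dotv_sumr (I : Type) (r : seq I) (P : pred I) (F : I -> V) v :
  dotv v (\sum_(i <- r | P i) F i) = \sum_(i <- r | P i) dotv v (F i).
Proof.
elim/big_rec2: _ => [|i y1 y2 _ <-]; last by rewrite dotvDr.
by rewrite dotvE big1 // => j _; rewrite mxE mulr0.
Qed.

Lemma sqn_ge0 v : 0 <= sqn v.
Proof. by rewrite /sqn dotvE sumr_ge0 // => j _; rewrite -expr2 sqr_ge0. Qed.

Lemma sqnD u v : sqn (u + v) = sqn u + 2 * dotv u v + sqn v.
Proof. by rewrite /sqn dotvDl !dotvDr (dotvC v u); lra. Qed.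

Lemma sqnB u v : sqn (u - v) = sqn u - 2 * dotv u v + sqn v.
Proof. by rewrite /sqn dotvBl !dotvBr (dotvC v u); lra. Qed.

Lemma sqnZ (a : R) v : sqn (a *: v) = a ^+ 2 * sqn v.
Proof. by rewrite /sqn dotvZl dotvZr mulrA expr2. Qed.

Lemma quad_form_abs_le (M : 'M[R]_d) (l u D : R) v :
  scal_le_mx l M -> mx_le_scal M u -> `|l| <= D -> `|u| <= D ->
  `|dotv (v *m M) v| <= D * sqn v.
Proof.
move=> /(_ v) lo /(_ v) hi lD uD.
have l_ge : - D <= l := lerNnormlW lD.
have u_le : u <= D := le_trans (ler_norm u) uD.
by have := sqn_ge0 v => v0; rewrite ler_norml; apply/andP; split; nra.
Qed.

Lemma dotv_young (e : R) u v : 0 < e -> 2 * dotv u v <= e * sqn u + sqn v / e.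
Proof.
move=> e0; have := sqn_ge0 (e *: u - v); rewrite sqnB sqnZ dotvZl => h.
rewrite -(ler_pM2l e0) mulrDr [e * (_ / e)]mulrCA mulfV ?gt_eqF // mulr1.
by rewrite expr2 in h; lra.
Qed.

Lemma mx_coord_le_norm u j : `|u 0 j| <= `|u|.
Proof.
rewrite [leRHS]/Num.Def.normr /= mx_normrE.
exact: le_trans (le_bigmax _ _ (0, j)).
Qed.

Lemma dotv_le_norm u v : `|dotv u v| <= d%:R * (`|u| * `|v|).
Proof.
rewrite dotvE; apply: le_trans (ler_norm_sum _ _ _) _.
apply: le_trans (_ : \sum_(j < d) (`|u| * `|v|) <= _).
  by apply: ler_sum => j _; rewrite normrM ler_pM ?mx_coord_le_norm.
by rewrite sumr_const card_ord mulr_natl.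
Qed.

Lemma is_diff_is_derive (W : normedModType R) (f : V -> W) p df w :
  is_diff p f df -> is_derive p w f (df w).
Proof.
move=> H; apply: DeriveDef; first exact: diff_derivable.
by rewrite deriveE // diff_val.
Qed.

Lemma is_derive_line (W : normedModType R) (f : V -> W) a w s df :
  is_derive (a + s *: w) w f df -> is_derive s 1 (fun t : R => f (a + t *: w)) df.
Proof.
case=> H1 H2.
have E : (fun h : R => h^-1 *: (((fun t : R => f (a + t *: w)) \o shift s) (h *: 1)
     - f (a + s *: w))) =
   (fun h : R => h^-1 *: ((f \o shift (a + s *: w)) (h *: w) - f (a + s *: w))).
  apply/funext => h /=; congr (_ *: (f _ - _)).
  by rewrite /shift /= -[h%:A]/(h * 1) mulr1 scalerDl addrCA.
apply: DeriveDef; first by rewrite /derivable E.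
by rewrite /derive E.
Qed.

Lemma is_derive_dotv (g : V -> V) p w dg v :
  is_derive p w g dg -> is_derive p w (fun q => dotv (g q) v) (dotv dg v).
Proof.
move=> [H1 H2].
have coord j : is_derive p w (fun q => g q 0 j) (dg 0 j).
  have /derivable_mxP /(_ 0 j) Hj := H1.
  by split => //; move: H2; rewrite derive_mx // => <-; rewrite mxE.
have -> : (fun q => dotv (g q) v) = \sum_(j < d) (v 0 j \*: fun q => g q 0 j).
  by apply/funext => q; rewrite fct_sumE dotvE; apply: eq_bigr => j _; rewrite /= mulrC.
apply: is_derive_eq (is_derive_sum (fun j => is_deriveZ (v 0 j) (coord j))) _.
by rewrite dotvE; apply: eq_bigr => j _; rewrite mulrC.
Qed.

Lemma MVT_closed (f df : R -> R) (a b : R) : a <= b ->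
  (forall s, a <= s <= b -> is_derive s 1 f (df s)) ->
  exists2 c, a <= c <= b & f b - f a = df c * (b - a).
Proof.
move=> ab fd.
have fd' s : s \in `]a, b[%R -> is_derive s 1 f (df s).
  by rewrite in_itv /= => /andP[sa sb]; apply: fd; rewrite !ltW.
have fc : {within `[a, b], continuous f}.
  apply: continuous_in_subspaceT => s; rewrite inE /= in_itv /= => sab.
  have [fs _] := fd s sab.
  exact/differentiable_continuous/derivable1_diffP.
by have [c] := MVT_segment ab fd' fc; rewrite in_itv /=; exists c.
Qed.

Lemma is_diff_sum (W : normedModType R) n (h : 'I_n -> V -> W) dh p :
  (forall i, is_diff p (h i) (dh i)) -> is_diff p (\sum_i h i) (\sum_i dh i).
Proof.
move=> hd; elim/big_ind2: _ => // [|f1 df1 f2 df2]; first exact: is_diff_cst.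
exact: is_diffD.
Qed.

Definition twice_diff_on (O : set V) (h : V -> R) (g : V -> V) (H : V -> 'M[R]_d) :=
  forall q, O q -> has_grad h q (g q) /\ has_hess g q (H q).

Section TwiceDiff.
Variable O : set V.

Lemma twice_diff_onB h1 h2 g1 g2 H1 H2 :
  twice_diff_on O h1 g1 H1 -> twice_diff_on O h2 g2 H2 ->
  twice_diff_on O (fun z => h1 z - h2 z) (fun z => g1 z - g2 z) (fun z => H1 z - H2 z).
Proof.
move=> t1 t2 q Oq; have [g1q H1q] := t1 q Oq; have [g2q H2q] := t2 q Oq; split.
  by apply: is_diff_eq (is_diffB g1q g2q) _; apply/funext => v /=; rewrite dotvBr.
by apply: is_diff_eq (is_diffB H1q H2q) _; apply/funext => v /=; rewrite mulmxBr.
Qed.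

Lemma twice_diff_onZ (k : R) h g H :
  twice_diff_on O h g H ->
  twice_diff_on O (fun z => k * h z) (fun z => k *: g z) (fun z => k *: H z).
Proof.
move=> t q Oq; have [gq Hq] := t q Oq; split.
  by apply: is_diff_eq (is_diffZ k gq) _; apply/funext => v /=; rewrite dotvZr.
apply: is_diff_eq (is_diffZ k Hq) _; by apply/funext => v; rewrite -scalemxAr.
Qed.

Lemma twice_diff_on_sum n (h : 'I_n -> V -> R) g H :
  (forall i, twice_diff_on O (h i) (g i) (H i)) ->
  twice_diff_on O (fun z => \sum_i h i z) (fun z => \sum_i g i z) (fun z => \sum_i H i z).
Proof.
move=> t q Oq; split.
  have -> : (fun z => \sum_i h i z) = \sum_i h i by apply/funext => z; rewrite fct_sumE.
  apply: is_diff_eq (is_diff_sum (fun i => (t i q Oq).1)) _.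
  by apply/funext => v; rewrite fct_sumE dotv_sumr.
have -> : (fun z => \sum_i g i z) = \sum_i g i by apply/funext => z; rewrite fct_sumE.
apply: is_diff_eq (is_diff_sum (fun i => (t i q Oq).2)) _.
by apply/funext => v; rewrite fct_sumE mulmx_sumr.
Qed.

Lemma twice_diff_on_grad h g H q w :
  twice_diff_on O h g H -> O q -> is_derive q w h (dotv w (g q)).
Proof. by move=> t Oq; apply: is_diff_is_derive (t q Oq).1. Qed.

Lemma twice_diff_on_hess h g H q w v :
  twice_diff_on O h g H -> O q -> is_derive q w (fun q => dotv (g q) v) (dotv (w *m H q) v).
Proof. by move=> t Oq; apply/is_derive_dotv; exact: is_diff_is_derive (t q Oq).2. Qed.

End TwiceDiff.

Lemma is_diff_approx (W : normedModType R) (g : V -> W) p dg (eps : R) :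
  is_diff p g dg -> 0 < eps -> exists2 r : R, 0 < r &
    forall z, `|z| < r -> `|g (p + z) - g p - dg z| <= eps * `|z|.
Proof.
move=> gd e0; have /diff_locally : differentiable g p by exact: ex_diff.
rewrite diff_val => /eqaddoP o.
have /nbhs_norm0P [r r0 Hr] := o eps e0.
by exists r => // z /Hr; rewrite !fctE /= opprD addrA [z + p]addrC.
Qed.

Lemma open_norm_ball (O : set V) p : open O -> O p ->
  exists2 r : R, 0 < r & forall z, `|z| < r -> O (p + z).
Proof.
move=> oO Op; have /nbhs0P /nbhs_norm0P [r r0 Hr] : nbhs p O by exact: open_nbhs_nbhs.
by exists r.
Qed.

Lemma eq0_le_eps (x C : R) : (forall eps, 0 < eps -> `|x| <= eps * C) -> x = 0.
Proof.
move=> H; have C0 : 0 <= C by rewrite -[C]mul1r; exact: le_trans (normr_ge0 x) (H 1 ltr01).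
apply/eqP; rewrite -normr_eq0 eq_le normr_ge0 andbT.
apply/ler_addgt0Pr => e e0; rewrite add0r.
have e1 : 0 < e / (C + 1) by apply: divr_gt0 => //; lra.
apply: le_trans (H _ e1) _.
by rewrite mulrAC ler_pdivrMr; nra.
Qed.

Section SecondDifference.
Variables (O : set V) (h : V -> R) (g : V -> V).
Hypothesis hg : forall q, O q -> has_grad h q (g q).

Lemma second_difference_mvt p u w (t : R) : 0 <= t ->
  (forall s, 0 <= s <= t -> O (p + (t *: w + s *: u)) /\ O (p + s *: u)) ->
  exists2 s, 0 <= s <= t &
    h (p + t *: u + t *: w) - h (p + t *: u) - h (p + t *: w) + h p =
    t * dotv u (g (p + (t *: w + s *: u)) - g (p + s *: u)).
Proof.
move=> t0 seg.
pose k s := h (p + t *: w + s *: u) - h (p + s *: u).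
have dk s : 0 <= s <= t ->
    is_derive s 1 k (dotv u (g (p + t *: w + s *: u)) - dotv u (g (p + s *: u))).
  move=> st; have [seg1 seg2] := seg s st; rewrite addrA in seg1.
  apply: is_deriveB; apply: is_derive_line.
    exact: is_diff_is_derive (hg seg1).
  exact: is_diff_is_derive (hg seg2).
have [s st E] := MVT_closed t0 dk.
exists s => //; move: E; rewrite /k !scale0r !addr0 subr0 dotvBr addrA mulrC => <-.
by rewrite [p + t *: u + _]addrAC; lra.
Qed.

Lemma second_difference_approx (M : 'M[R]_d) p u w (eps r t : R) : 0 < eps ->
  (forall z, `|z| < r -> O (p + z)) ->
  (forall z, `|z| < r -> `|g (p + z) - g p - z *m M| <= eps * `|z|) ->
  0 < t -> t * (`|u| + `|w|) < r ->
  `|h (p + t *: u + t *: w) - h (p + t *: u) - h (p + t *: w) + h p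
      - t ^+ 2 * dotv (w *m M) u|
    <= t ^+ 2 * (eps * (d%:R * (`|u| * (2 * `|u| + `|w|)))).
Proof.
move=> e0 HO He t0 tr.
have nu0 := normr_ge0 u; have nw0 := normr_ge0 w.
have nz1 s : 0 <= s <= t -> `|t *: w + s *: u| <= t * (`|u| + `|w|).
  move=> /andP[s0 st]; apply: le_trans (ler_normD _ _) _.
  by rewrite !normrZ !ger0_norm ?(ltW t0) //; nra.
have nz2 s : 0 <= s <= t -> `|s *: u| <= t * `|u|.
  by move=> /andP[s0 st]; rewrite normrZ ger0_norm //; nra.
have seg s : 0 <= s <= t -> O (p + (t *: w + s *: u)) /\ O (p + s *: u).
  move=> st; split; apply: HO; first exact: le_lt_trans (nz1 s st) tr.
  by apply: le_lt_trans (nz2 s st) (le_lt_trans _ tr); nra.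
have [s st ->] := second_difference_mvt (ltW t0) seg.
set z1 := t *: w + s *: u; set z2 := s *: u.
set e1 := g (p + z1) - g p - z1 *m M; set e2 := g (p + z2) - g p - z2 *m M.
have eA : dotv u (g (p + z1) - g (p + z2)) = dotv u e1 - dotv u e2 + t * dotv (w *m M) u.
  rewrite /e1 /e2 !dotvBr /z1 /z2 mulmxDl -!scalemxAl !dotvDr !dotvZr (dotvC u (w *m M)).
  lra.
have B1 : `|dotv u e1| <= d%:R * (`|u| * (eps * (t * (`|u| + `|w|)))).
  apply: le_trans (dotv_le_norm _ _) _; rewrite ler_wpM2l // ler_wpM2l //.
  apply: le_trans (He _ _) _; first exact: le_lt_trans (nz1 _ st) tr.
  by rewrite ler_wpM2l ?(ltW e0) ?nz1.
have B2 : `|dotv u e2| <= d%:R * (`|u| * (eps * (t * `|u|))).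
  apply: le_trans (dotv_le_norm _ _) _; rewrite ler_wpM2l // ler_wpM2l //.
  apply: le_trans (He _ _) _; first by apply: le_lt_trans (nz2 _ st) _; nra.
  by rewrite ler_wpM2l ?(ltW e0) ?nz2.
rewrite eA expr2.
have -> : t * (dotv u e1 - dotv u e2 + t * dotv (w *m M) u) - t * t * dotv (w *m M) u
  = t * (dotv u e1 - dotv u e2) by ring.
rewrite normrM ger0_norm ?(ltW t0) //.
have := ler_normB (dotv u e1) (dotv u e2).
move: B1 B2; set A1 := `|dotv u e1|; set A2 := `|dotv u e2|; set Z := `|_ - _|.
have D0 : 0 <= (d%:R : R) by [].
move=> B1 B2 BZ; nra.
Qed.
End SecondDifference.

(* Both orders of the mixed second difference at p equal t^2 times the Hessian
   form up to o(t^2). *)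
Lemma hess_sym (O : set V) h g H p u w : open O -> twice_diff_on O h g H -> O p ->
  dotv (u *m H p) w = dotv (w *m H p) u.
Proof.
move=> oO hgH Op; have hg q : O q -> has_grad h q (g q) by case/hgH.
have [r0 r00 HO] := open_norm_ball oO Op.
have nu0 := normr_ge0 u; have nw0 := normr_ge0 w.
apply/eqP; rewrite -subr_eq0; apply/eqP.
pose c1 := d%:R * (`|u| * (2 * `|u| + `|w|)).
pose c2 := d%:R * (`|w| * (2 * `|w| + `|u|)).
apply: (@eq0_le_eps _ (c1 + c2)) => eps e0.
have [r1 r10 He] := is_diff_approx (hgH p Op).2 e0.
pose r := Num.min r0 r1; pose t := r / (2 * (`|u| + `|w| + 1)).
have r0' : 0 < r by rewrite lt_min r00 r10.
have t0 : 0 < t by apply: divr_gt0 => //; lra.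
have tr : t * (`|u| + `|w|) < r by rewrite /t mulrAC ltr_pdivrMr; nra.
have tr' : t * (`|w| + `|u|) < r by rewrite addrC.
have HO' z : `|z| < r -> O (p + z).
  by move=> zr; apply/HO/(lt_le_trans zr); rewrite ge_min lexx.
have He' z : `|z| < r -> `|g (p + z) - g p - z *m H p| <= eps * `|z|.
  by move=> zr; apply/He/(lt_le_trans zr); rewrite ge_min lexx orbT.
have h1 := second_difference_approx hg (u := u) (w := w) e0 HO' He' t0 tr.
have h2 := second_difference_approx hg (u := w) (w := u) e0 HO' He' t0 tr'.
rewrite [p + t *: w + t *: u]addrAC -/c1 -/c2 in h1 h2.
set X := h (p + t *: u + t *: w) - h (p + t *: u) - h (p + t *: w) in h1.
have EX : h (p + t *: u + t *: w) - h (p + t *: w) - h (p + t *: u) = X by rewrite /X; lra.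
rewrite EX in h2.
set B1 := dotv (u *m H p) w in h2 *; set B2 := dotv (w *m H p) u in h1 *.
have t2 : 0 < t ^+ 2 by apply: exprn_gt0.
rewrite -(ler_pM2l t2).
have -> : t ^+ 2 * `|B1 - B2| = `|(X + h p - t ^+ 2 * B2) - (X + h p - t ^+ 2 * B1)|.
  by rewrite -[in LHS](ger0_norm (sqr_ge0 t)) -normrM; congr `|_|; ring.
apply: le_trans (ler_normB _ _) _.
by rewrite !mulrDr; apply: lerD.
Qed.

Lemma second_order_lb_unit (phi dphi d2phi : R -> R) (c : R) :
  (forall s : R, 0 <= s <= 1 -> is_derive s 1 phi (dphi s)) ->
  (forall s : R, 0 <= s <= 1 -> is_derive s 1 dphi (d2phi s)) ->
  (forall s : R, 0 <= s <= 1 -> c <= d2phi s) ->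
  phi 0 + dphi 0 + c / 2 <= phi 1.
Proof.
move=> d1 d2 lb.
have dphi_lb (s : R) : 0 <= s <= 1 -> c * s <= dphi s - dphi 0.
  move=> /andP[s0 s1].
  have sub (r : R) : 0 <= r <= s -> 0 <= r <= 1.
    by case/andP=> r0 rs; rewrite r0 (le_trans rs s1).
  have [r rs ->] := MVT_closed s0 (fun r rs => d2 r (sub r rs)).
  by rewrite subr0 ler_wpM2r ?lb ?sub.
pose chi (s : R) := phi s - dphi 0 * s - c / 2 * (s * s).
have dchi (s : R) : 0 <= s <= 1 -> is_derive s 1 chi (dphi s - dphi 0 - c * s).
  move=> s01; apply: is_derive_eq.
    exact: is_deriveB (is_deriveB (d1 s s01) (is_deriveZ _ (is_derive_id _ _)))
      (is_deriveZ _ (is_deriveM (is_derive_id _ _) (is_derive_id _ _))).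
  by rewrite /GRing.scale /=; lra.
have [r r01 E] := MVT_closed ler01 dchi.
have := dphi_lb r r01; rewrite /chi !(mulr0, mul0r, mulr1, mul1r, subr0) in E; lra.
Qed.

Section ConvexFunctions.
Variable S : set V.

Lemma convex_fun_onS (S' : set V) h : S `<=` S' -> convex_fun_on S' h -> convex_fun_on S h.
Proof. by move=> SS' ch u v seg; apply: ch => t /seg /SS'. Qed.

Lemma convex_fun_onD h1 h2 : convex_fun_on S h1 -> convex_fun_on S h2 ->
  convex_fun_on S (fun z => h1 z + h2 z).
Proof.
move=> c1 c2 u v seg t t01; have := c1 u v seg t t01; have := c2 u v seg t t01; lra.
Qed.

Lemma convex_fun_onZ (k : R) h : 0 <= k -> convex_fun_on S h ->
  convex_fun_on S (fun z => k * h z).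
Proof.
move=> k0 ch u v seg t t01; have := ler_wpM2l k0 (ch u v seg t t01).
by rewrite mulrDr mulrCA [k * (_ * h v)]mulrCA.
Qed.

Lemma convex_fun_on_sum n (h : 'I_n -> V -> R) : (forall i, convex_fun_on S (h i)) ->
  convex_fun_on S (fun z => \sum_i h i z).
Proof.
move=> ch u v seg t t01; rewrite mulr_sumr mulr_sumr -big_split.
by apply: ler_sum => i _; exact: ch.
Qed.

Lemma convex_fun_on_affine c x : convex_fun_on S (fun u => dotv c (u - x)).
Proof. by move=> u v _ t _; rewrite !dotvBr !dotvDr !dotvZr; lra. Qed.

End ConvexFunctions.

Lemma sym_form_young (M : 'M[R]_d) (D e : R) a b :
  (forall u v, dotv (u *m M) v = dotv (v *m M) u) ->
  (forall u, `|dotv (u *m M) u| <= D * sqn u) -> 0 < e ->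
  2 * dotv (a *m M) b <= D * (e * sqn a + sqn b / e).
Proof.
move=> symM bM e0.
have polar : dotv ((e *: a + b) *m M) (e *: a + b) - dotv ((e *: a - b) *m M) (e *: a - b)
    = 4 * e * dotv (a *m M) b.
  rewrite mulmxDl mulmxBl -scalemxAl !dotvBl !dotvDl !dotvBr !dotvDr !dotvZl !dotvZr.
  by rewrite (symM b a); ring.
have sq : sqn (e *: a + b) + sqn (e *: a - b) = 2 * (e ^+ 2 * sqn a + sqn b).
  by rewrite sqnD sqnB sqnZ; ring.
have bp := le_trans (ler_norm _) (bM (e *: a + b)).
have bn : - dotv ((e *: a - b) *m M) (e *: a - b) <= D * sqn (e *: a - b).
  by apply: le_trans (bM _); rewrite -normrN ler_norm.
rewrite -(ler_pM2l e0).
have -> : e * (D * (e * sqn a + sqn b / e)) = D / 2 * (sqn (e *: a + b) + sqn (e *: a - b)).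
  by rewrite sq; field; rewrite gt_eqF.
lra.
Qed.

Section ConvexAnalysis.
Variable K : set V.
Hypothesis convK : convex_set_euc K.

Lemma convex_set_seg u z (s : R) : K u -> K z -> 0 <= s <= 1 -> K (u + s *: (z - u)).
Proof.
move=> Ku Kz s01; have := convK Kz Ku s01.
by rewrite scalerBl scale1r scalerBr addrCA addrC.
Qed.

Lemma convex_argmin_first_order (h G : V -> R) xh z dh :
  convex_fun_on K G -> K xh -> (forall z, K z -> h xh + G xh <= h z + G z) -> K z ->
  is_derive xh (z - xh) h dh -> G xh - G z <= dh.
Proof.
move=> cG Kxh xh_min Kz [hd <-]; set w := z - xh.
have quot (t : R) : 0 < t -> t <= 1 ->
    G xh - G z <= t^-1 *: ((h \o shift xh) (t *: w) - h xh).
  move=> t0 t1; have t01 : 0 <= t <= 1 by rewrite (ltW t0) t1.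
  have := xh_min _ (convex_set_seg Kxh Kz t01).
  have := cG z xh (fun s s01 => convK Kz Kxh s01) t t01.
  have -> : t *: z + (1 - t) *: xh = xh + t *: w.
    by rewrite /w scalerBl scale1r scalerBr addrCA addrC.
  rewrite /= [t *: w + xh]addrC /GRing.scale /= => cvx hmin.
  by rewrite ler_pdivlMl //; nra.
rewrite /derive cvg_at_rightE; last exact: hd.
apply: limr_ge; first by apply/cvg_ex; exists ('D_w h xh); exact: cvg_dnbhs_at_right.
near=> t; apply: quot; first by near: t; exact: nbhs_right_gt.
by apply: ltW; near: t; exact: nbhs_right_lt ltr01.
Unshelve. all: by end_near.
Qed.

Variable O : set V.
Hypothesis KO : K `<=` O.

Lemma hess_lb_first_order h g H (mu : R) u z :
  twice_diff_on O h g H -> (forall q, K q -> scal_le_mx mu (H q)) -> K u -> K z ->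
  h u + dotv (z - u) (g u) + mu / 2 * sqn (z - u) <= h z.
Proof.
move=> hgH Hmu Ku Kz; set w := z - u.
have seg (s : R) : 0 <= s <= 1 -> K (u + s *: w) by exact: convex_set_seg.
have := @second_order_lb_unit (fun s => h (u + s *: w)) (fun s => dotv (g (u + s *: w)) w)
  (fun s => dotv (w *m H (u + s *: w)) w) (mu * sqn w).
rewrite scale0r addr0 scale1r [u + w]addrC subrK (dotvC (g u)) mulrAC; apply.
- move=> s s01; apply: is_derive_line; rewrite dotvC.
  exact: twice_diff_on_grad hgH (KO (seg s s01)).
- move=> s s01; apply: (is_derive_line (f := fun q => dotv (g q) w)).
  exact: twice_diff_on_hess hgH (KO (seg s s01)).
- by move=> s s01; exact: Hmu (seg s s01) w.
Qed.

Lemma dotv_grad_incr_le h g H (D e : R) x x' v :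
  open O -> twice_diff_on O h g H ->
  (forall q a, K q -> `|dotv (a *m H q) a| <= D * sqn a) -> 0 < e -> K x -> K x' ->
  2 * dotv (g x' - g x) v <= D * (e * sqn (x' - x) + sqn v / e).
Proof.
move=> oO hgH bH e0 Kx Kx'; set w := x' - x.
have seg (s : R) : 0 <= s <= 1 -> K (x + s *: w) by exact: convex_set_seg.
have [r r01] := @MVT_closed (fun s => dotv (g (x + s *: w)) v)
  (fun s => dotv (w *m H (x + s *: w)) v) 0 1 ler01
  (fun s s01 => is_derive_line (f := fun q => dotv (g q) v)
     (twice_diff_on_hess _ _ hgH (KO (seg s s01)))).
rewrite scale1r scale0r addr0 [x + w]addrC subrK subr0 mulr1 -dotvBl => ->.
apply: sym_form_young e0 => [a b|a]; first exact: hess_sym oO hgH (KO (seg r r01)).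
exact: bH (seg r r01).
Qed.

Lemma surrogate_step_gap (F ft G : V -> R) (gF gt : V -> V) (HF Ht : V -> 'M[R]_d)
    (mu D : R) x xh xs y :
  open O -> twice_diff_on O F gF HF -> twice_diff_on O ft gt Ht ->
  (forall q, K q -> scal_le_mx mu (HF q)) ->
  (forall q a, K q -> `|dotv (a *m (Ht q - HF q)) a| <= D * sqn a) ->
  convex_fun_on K G -> 0 < mu -> 0 < D -> K x -> K xh -> K xs ->
  (forall z, K z -> ft xh + dotv (y - gt x) (xh - x) + G xh
                    <= ft z + dotv (y - gt x) (z - x) + G z) ->
  F xh + G xh - (F xs + G xs) <= D ^+ 2 / mu * sqn (xh - x) + sqn (gF x - y) / mu.
Proof.
move=> oO tF tft HFmu bD cG mu0 D0 Kx Kxh Kxs xh_min.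
set v := xs - xh; set c := y - gt x.
have opt : G xh + dotv c (xh - x) - (G xs + dotv c (xs - x)) <= dotv v (gt xh).
  apply: (convex_argmin_first_order (h := ft) (G := fun u => G u + dotv c (u - x)))
    Kxh _ Kxs (twice_diff_on_grad _ tft (KO Kxh)).
    exact: convex_fun_onD cG (convex_fun_on_affine c x).
  by move=> z Kz; have := xh_min z Kz; lra.
have affine : dotv c (xh - x) - dotv c (xs - x) = - dotv v c.
  by rewrite !(dotvC c) !dotvBl; lra.
have strong := hess_lb_first_order tF HFmu Kxh Kxs.
have incr := dotv_grad_incr_le (e := 2 * D / mu) v oO (twice_diff_onB tft tF) bD
  ltac:(by apply: divr_gt0; lra) Kx Kxh.
have mu2 : 0 < mu / 2 by lra.
have young := dotv_young v (y - gF x) mu2.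
have -> : sqn (gF x - y) = sqn (y - gF x) by rewrite !sqnB (dotvC y); lra.
have e1 : D * (2 * D / mu * sqn (xh - x) + sqn v / (2 * D / mu))
    = 2 * (D ^+ 2 / mu * sqn (xh - x)) + mu / 2 * sqn v.
  by field; rewrite !gt_eqF.
have e2 : sqn (y - gF x) / (mu / 2) = 2 * (sqn (y - gF x) / mu).
  by field; rewrite gt_eqF.
rewrite e1 dotvC !dotvBr in incr; rewrite e2 !dotvBr in young.
rewrite [dotv v c]dotvBr in affine; rewrite -/v in strong.
lra.
Qed.

End ConvexAnalysis.
Section ConvexCombination.
Variable K : set V.
Hypothesis convK : convex_set_euc K.

Lemma jensen (U : V -> R) (I : eqType) (r : seq I) (c : I -> R) (z : I -> V) :
  convex_fun_on K U ->
  (forall j, 0 <= c j) -> \sum_(j <- r) c j = 1 -> (forall j, K (z j)) ->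
  K (\sum_(j <- r) c j *: z j) /\ U (\sum_(j <- r) c j *: z j) <= \sum_(j <- r) c j * U (z j).
Proof.
move=> convU; elim: r c => [|a r IH] c c0.
  by rewrite big_nil => /eqP; rewrite eq_sym oner_eq0.
rewrite !big_cons => sum1 Kz.
have tail_ge0 : 0 <= \sum_(j <- r) c j by exact: sumr_ge0.
have [ca1|ca1] := eqVneq (c a) 1.
  have /eqP : \sum_(j <- r) c j = 0 by lra.
  rewrite psumr_eq0 // => /allP tail0.
  have cj0 j : j \in r -> c j = 0 by move=> /tail0 /eqP.
  have -> : \sum_(j <- r) c j *: z j = 0.
    by rewrite big1_seq // => j /andP[_ /cj0 ->]; rewrite scale0r.
  have -> : \sum_(j <- r) c j * U (z j) = 0.
    by rewrite big1_seq // => j /andP[_ /cj0 ->]; rewrite mul0r.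
  by rewrite ca1 scale1r mul1r !addr0.
pose t := 1 - c a; have t0 : 0 < t by rewrite subr_gt0 lt_neqAle ca1; lra.
have ct j : c j = t * (c j / t) by rewrite mulrCA mulfV ?gt_eqF ?mulr1.
have tail1 : \sum_(j <- r) c j / t = 1.
  rewrite -mulr_suml (_ : \sum_(j <- r) c j = t); first exact: divff (lt0r_neq0 t0).
  by rewrite /t; lra.
have [Kq Uq] := IH (fun j => c j / t) (fun j => divr_ge0 (c0 j) (ltW t0)) tail1 Kz.
rewrite (eq_bigr _ (fun j _ => congr1 (fun k => k *: z j) (ct j))).
rewrite (eq_bigr _ (fun j _ => congr1 (fun k => k * U (z j)) (ct j))).
rewrite -(eq_bigr _ (fun j _ => scalerA _ _ _)) -scaler_sumr.
rewrite -(eq_bigr _ (fun j _ => mulrA _ _ _)) -mulr_sumr.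
have ca01 : 0 <= c a <= 1 by rewrite c0 /=; lra.
split; first exact: convK (Kz a) Kq ca01.
apply: le_trans (convU _ _ (fun s s01 => convK (Kz a) Kq s01) _ ca01) _.
by rewrite lerD2l ler_wpM2l ?subr_ge0 //; lra.
Qed.

Lemma convex_comb_in (I : eqType) (r : seq I) (c : I -> R) (z : I -> V) :
  (forall j, 0 <= c j) -> \sum_(j <- r) c j = 1 -> (forall j, K (z j)) ->
  K (\sum_(j <- r) c j *: z j).
Proof.
have convU0 : convex_fun_on K (fun=> 0) by move=> u v _ t _; rewrite !mulr0 addr0.
by move=> c0 c1 Kz; have [] := jensen convU0 c0 c1 Kz.
Qed.

Lemma convex_relax_le (U : V -> R) x xh (a : R) : convex_fun_on K U -> K x -> K xh ->
  0 <= a <= 1 -> U (x + a *: (xh - x)) <= (1 - a) * U x + a * U xh.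
Proof.
move=> convU Kx Kxh a01.
have -> : x + a *: (xh - x) = a *: xh + (1 - a) *: x.
  by rewrite scalerBl scale1r scalerBr addrCA addrC.
by rewrite [_ * U x + _]addrC; apply: convU => // s s01; exact: convK.
Qed.

Section DoublyStochastic.
Variables (m : nat) (W : 'M[R]_m).
Hypotheses (W_ge0 : forall i j, 0 <= W i j) (W_row : forall i, \sum_j W i j = 1)
  (W_col : forall j, \sum_i W i j = 1).

Lemma mix_convex_sum_le (U : V -> R) (z : 'I_m -> V) (c : R) :
  convex_fun_on K U -> (forall j, K (z j)) ->
  \sum_i (U (\sum_j W i j *: z j) - c) <= \sum_j (U (z j) - c).
Proof.
move=> convU Kz.
have row i : U (\sum_j W i j *: z j) - c <= \sum_j W i j * (U (z j) - c).
  have -> : \sum_j W i j * (U (z j) - c) = \sum_j W i j * U (z j) - c.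
    by rewrite (eq_bigr _ (fun j _ => mulrBr _ _ _)) sumrB -mulr_suml W_row mul1r.
  by rewrite lerD2r; have [] := jensen convU (W_ge0 i) (W_row i) Kz.
apply: le_trans (ler_sum _ (fun i _ => row i)) _; rewrite exchange_big /=.
rewrite (eq_bigr (fun j => U (z j) - c)) // => j _.
by rewrite -mulr_suml W_col mul1r.
Qed.

Variables (a : R) (x xh : 'I_m -> V).
Hypothesis a01 : 0 <= a <= 1.
Let x_relax j := x j + a *: (xh j - x j).

Lemma relaxed_mix_in i : (forall j, K (x j)) -> (forall j, K (xh j)) ->
  K (\sum_j W i j *: x_relax j).
Proof. by move=> Kx Kxh; apply: convex_comb_in => // j; exact: convex_set_seg. Qed.

Lemma relaxed_mix_potential_le (U : V -> R) (c : R) (x' : 'I_m -> V) :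
  convex_fun_on K U -> (forall j, K (x j)) -> (forall j, K (xh j)) ->
  (forall i, x' i = \sum_j W i j *: x_relax j) ->
  \sum_i (U (x' i) - c) <= (1 - a) * \sum_i (U (x i) - c) + a * \sum_i (U (xh i) - c).
Proof.
move=> convU Kx Kxh x'E; under eq_bigr do rewrite x'E.
have Kx_relax j : K (x_relax j) by exact: convex_set_seg.
apply: le_trans (mix_convex_sum_le c convU Kx_relax) _.
rewrite !mulr_sumr -big_split /=; apply: ler_sum => j _.
have := convex_relax_le convU (Kx j) (Kxh j) a01; rewrite /x_relax; lra.
Qed.

End DoublyStochastic.

End ConvexCombination.

End EuclideanCalculus.

Lemma descent_rescale {R : realFieldType} {mu D a p1 p0 s ds dq : R} :
  0 < mu -> 0 < D -> 0 <= a ->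
  p1 <= (1 - a) * p0 + a * s -> s <= D ^+ 2 / mu * ds + dq / mu ->
  mu / D ^+ 2 * (p1 - (1 - a) * p0 - a / mu * dq) <= a * ds.
Proof.
move=> mu0 D0 a0 step gap; have D2 : 0 < D ^+ 2 by exact: exprn_gt0.
have key : p1 - (1 - a) * p0 - a / mu * dq <= D ^+ 2 / mu * (a * ds).
  by have := ler_wpM2l a0 gap; rewrite mulrDr; lra.
apply: le_trans (ler_wpM2l (ltW (divr_gt0 mu0 D2)) key) _.
have -> : mu / D ^+ 2 * (D ^+ 2 / mu * (a * ds)) = a * ds by field; rewrite !gt_eqF.
exact: lexx.
Qed.

Theorem lemma3p2 (R : realType) (d m : nat)
  (* (A) *)
  (K O : set 'rV[R]_d)
  (f : 'I_m -> 'rV[R]_d -> R) (gf : 'I_m -> 'rV[R]_d -> 'rV[R]_d)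
  (Hf : 'I_m -> 'rV[R]_d -> 'M[R]_d)
  (G : 'rV[R]_d -> R) (mu L : R) (xstar : 'rV[R]_d)
  (* (B), (W) *)
  (E : rel 'I_m) (W : 'M[R]_m)
  (* (C) *)
  (ft : 'I_m -> 'rV[R]_d -> 'rV[R]_d -> R)
  (gft : 'I_m -> 'rV[R]_d -> 'rV[R]_d -> 'rV[R]_d)
  (Hft : 'I_m -> 'rV[R]_d -> 'rV[R]_d -> 'M[R]_d)
  (Dl Du : 'I_m -> R)
  (* SONATA *)
  (alpha : R)
  (x y xh : nat -> 'I_m -> 'rV[R]_d) :
  let F := fun z => m%:R^-1 * \sum_(i < m) f i z in
  let gradF := fun z => m%:R^-1 *: \sum_(i < m) gf i z in
  let HF := fun z => m%:R^-1 *: \sum_(i < m) Hf i z in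
  let U := fun z => F z + G z in
  let Dmax := \big[Num.max/0]_(i < m) Num.max `|Dl i| `|Du i| in
  (* (A) *)
  (0 < m)%N ->
  (exists z, K z) -> closed K -> convex_set_euc K ->
  open O -> K `<=` O ->
  (forall i z, O z -> has_grad (f i) z (gf i z) /\ has_hess (gf i) z (Hf i z)) ->
  (forall i, convex_fun_on O (f i)) ->
  0 < mu ->
  (forall z, K z -> scal_le_mx mu (HF z) /\ mx_le_scal (HF z) L) ->
  convex_fun_on K G ->
  K xstar -> (forall z, K z -> U xstar <= U z) ->
  (forall z, K z -> U z <= U xstar -> z = xstar) ->
  (* (B) *)
  symmetric E -> (forall i j, connect E i j) ->
  (* (W) *)
  (forall i, 0 < W i i) ->
  (forall i j, i != j -> (0 < W i j <-> E i j)) ->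
  (forall i j, i != j -> ~~ E i j -> W i j = 0) ->
  (forall i j, 0 <= W i j) ->
  (forall i, \sum_(j < m) W i j = 1) ->
  (forall j, \sum_(i < m) W i j = 1) ->
  (* (C) *)
  (forall i u z, O u -> O z ->
     has_grad (fun u => ft i u z) u (gft i u z) /\ has_hess (fun u => gft i u z) u (Hft i u z)) ->
  (forall i z, O z -> gft i z z = gf i z) ->
  (forall i z, K z -> lipschitz_on_euc K (fun u => gft i u z)) ->
  (forall i z, K z -> strongly_convex_on K (fun u => ft i u z)) ->
  (forall i, Dl i <= Du i) ->
  (forall i u z, K u -> K z ->
     scal_le_mx (Dl i) (Hft i u z - HF u) /\ mx_le_scal (Hft i u z - HF u) (Du i)) ->
  (* step size and D_max *)
  0 < alpha <= 1 ->
  0 < Dmax ->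
  (* SONATA iterates *)
  (forall i, K (x 0%N i)) ->
  (forall i, y 0%N i = gf i (x 0%N i)) ->
  (forall nu i, K (xh nu i) /\
     forall z, K z ->
       ft i (xh nu i) (x nu i) + dotv (y nu i - gf i (x nu i)) (xh nu i - x nu i) + G (xh nu i)
       <= ft i z (x nu i) + dotv (y nu i - gf i (x nu i)) (z - x nu i) + G z) ->
  (forall nu i, x nu.+1 i =
     \sum_(j < m) W i j *: (x nu j + alpha *: (xh nu j - x nu j))) ->
  (forall nu i, y nu.+1 i =
     \sum_(j < m) W i j *: (y nu j + gf j (x nu.+1 j) - gf j (x nu j))) ->
  forall nu : nat,
    let dsq := \sum_(i < m) sqn (xh nu i - x nu i) in
    let deltasq := \sum_(i < m) sqn (gradF (x nu i) - y nu i) in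
    let p := fun n : nat => \sum_(i < m) (U (x n i) - U xstar) in
    alpha * dsq >=
      mu / Dmax ^+ 2 * (p nu.+1 - (1 - alpha) * p nu - alpha / mu * deltasq).
Proof.
move=> F gradF HF U Dmax _ _ _ convK openO KO f_smooth f_convex mu_gt0 HF_bounds G_convex
  Kxstar _ _ _ _ _ _ _ W_ge0 W_row W_col ft_smooth ft_grad _ _ _ Hft_bounds alpha01 Dmax_gt0
  Kx0 _ xh_argmin x_next _ nu.
have alpha01' : 0 <= alpha <= 1 by case/andP: alpha01 => /ltW -> ->.
have F_smooth : twice_diff_on O F gradF HF := twice_diff_onZ _ (twice_diff_on_sum f_smooth).
have U_convex : convex_fun_on K U.
  apply: convex_fun_onD G_convex; apply: convex_fun_onZ; first by rewrite invr_ge0.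
  by apply: convex_fun_on_sum => i; exact: convex_fun_onS KO (f_convex i).
have Kx n : forall i, K (x n i).
  elim: n => [|n IH] i; first exact: Kx0.
  by rewrite x_next; apply: relaxed_mix_in => // j; case: (xh_argmin n j).
have gap i : U (xh nu i) - U xstar <=
    Dmax ^+ 2 / mu * sqn (xh nu i - x nu i) + sqn (gradF (x nu i) - y nu i) / mu.
  have [Kxh xh_min] := xh_argmin nu i; have Ox := KO _ (Kx nu i).
  have /andP[DlD DuD] : (`|Dl i| <= Dmax) && (`|Du i| <= Dmax).
    by rewrite -ge_max; exact: le_bigmax (fun j => Num.max `|Dl j| `|Du j|) i.
  apply: (surrogate_step_gap convK KO openO F_smooth (fun u Ou => ft_smooth i u _ Ou Ox))
    => // [q /HF_bounds [] //|q a Kq|z].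
    by have [lo hi] := Hft_bounds i q _ Kq (Kx nu i); exact: quad_form_abs_le lo hi DlD DuD.
  by rewrite ft_grad //; exact: xh_min.
have step := relaxed_mix_potential_le convK W_ge0 W_row W_col alpha01' (U xstar) U_convex (Kx nu)
  (fun j => (xh_argmin nu j).1) (x_next nu).
cbv zeta beta; apply: (descent_rescale mu_gt0 Dmax_gt0 (ltW (proj1 (andP alpha01))) step).
by rewrite mulr_sumr mulr_suml -big_split; exact: ler_sum.
Qed.
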